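(* Let $q$ be a prime power and let $l_1,l_2$ be distinct odd primes, each coprime to $q$. If every irreducible monic factor of $x^{l_1}-1$ and of $x^{l_2}-1$ in $\mathbb{F}_{q^2}[x]$ is SCRIM and $\gcd(\mathrm{ord}_{l_1}(q^2),\mathrm{ord}_{l_2}(q^2))=1$, then $|\Omega_{q^2,l_1l_2}|=|\Omega_{q^2,l_1}|\,|\Omega_{q^2,l_2}|$.
   Context: $\mathbb{F}_{q^2}$ is the finite field with $q^2$ elements. For $\alpha\in\mathbb{F}_{q^2}$ put $\bar\alpha=\alpha^q$, and for $f(x)=\sum_i f_ix^i$ put $\overline{f(x)}=\sum_i \bar f_i x^i$. For $f(x)$ with $f(0)\neq 0$, $f^*(x)=x^{\deg f}f(0)^{-1}f(1/x)$ and $f^\dagger(x)=\overline{f^*(x)}$. A polynomial is SCRIM if it is monic, irreducible over $\mathbb{F}_{q^2}$, has nonzero constant term, and satisfies $f=f^\dagger$. $\Omega_{q^2,n}$ denotes the set of SCRIM polynomials in $\mathbb{F}_{q^2}[x]$ dividing $x^n-1$. $\mathrm{ord}_l(a)$ is the multiplicative order of $a$ modulo $l$. *)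

From HB Require Import structures.
From mathcomp Require Import all_boot all_order all_algebra all_field.
From mathcomp Require Import boolp.
Set Implicit Arguments. Unset Strict Implicit. Unset Printing Implicit Defensive.
Import GRing.Theory.
Local Open Scope ring_scope.

(* F is meant to be the field with q^2 elements; bar a = a^q. *)
Definition fbar (F : finFieldType) (q : nat) (a : F) : F := a ^+ q.

Definition pbar (F : finFieldType) (q : nat) (f : {poly F}) : {poly F} :=
  map_poly (fbar q) f.

(* f^star(x) = x^{deg f} f(0)^{-1} f(1/x): reversed coefficient list scaled by f(0)^{-1} *)
Definition pstar (F : finFieldType) (f : {poly F}) : {poly F} :=
  (f`_0)^-1 *: Poly (rev f).

Definition pdagger (F : finFieldType) (q : nat) (f : {poly F}) : {poly F} :=
  pbar q (pstar f).

Definition SCRIM (F : finFieldType) (q : nat) (f : {poly F}) : Prop :=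
  [/\ f \is monic, irreducible_poly f, f`_0 != 0 & f = pdagger q f].

(* Omega_{q^2,n}: the (duplicate-free) list of SCRIM polynomials dividing x^n - 1.
   For n >= 1 every divisor of x^n-1 has size <= n+1, so it is Poly of some
   (n+1)-tuple; the classical boolean reflection `[< _ >] is used to filter. *)
Definition Omega (F : finFieldType) (q n : nat) : seq {poly F} :=
  [seq f <- undup [seq Poly (tval t) | t : (n.+1).-tuple F]
     | `[< SCRIM q f /\ f %| 'X^n - 1 >] ].

(* ord_l(a): least k >= 1 with a^k = 1 mod l (searched in 1..l; correct when
   l > 1 and coprime a l, since then ord_l(a) <= l - 1). *)
Definition ordmod (l a : nat) : nat :=
  (find (fun k => a ^ k.+1 == 1 %[mod l]) (iota 0 l)).+1.

(* Let L be an algebraic closure of F, Q = #|F| = q^2, and write x^i for the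
   image of x : {poly F} in {poly L}.  The roots of a monic irreducible f over F
   form one orbit of z |-> z^Q: the product of the X - w over such an orbit is
   fixed by the Frobenius, hence comes from F, and it divides every polynomial
   over F vanishing at one point of the orbit.  The roots of f^dagger are the
   images of those of f under z |-> z^-q, so f is SCRIM as soon as this map sends
   one root of f to a Q-conjugate of it.
   An (l1 l2)-th root of unity factors uniquely as z = x y with x^l1 = y^l2 = 1.
   As x and y are fixed by the ord_l1(Q)-th and ord_l2(Q)-th powers of the
   Frobenius and these orders are coprime, the Chinese remainder theorem makes
   every pair (x^(Q^i), y^(Q^j)) of the form (x^(Q^k), y^(Q^k)).  Hence z^-q is
   a conjugate of z, so every irreducible factor of X^(l1 l2) - 1 is SCRIM, and
   sending (f1, f2) to the factor vanishing at (root of f1) * (root of f2) is a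
   bijection Omega_l1 x Omega_l2 -> Omega_(l1 l2). *)

From HB Require Import structures.
From mathcomp Require Import all_boot all_order all_algebra all_field.
From mathcomp Require Import pgroup cyclic boolp zify.
Set Implicit Arguments. Unset Strict Implicit. Unset Printing Implicit Defensive.
Import GRing.Theory.
Local Open Scope ring_scope.

Lemma expr_exp_periodic (R : pzSemiRingType) (x : R) a o m :
  x ^+ (a ^ o) = x -> x ^+ (a ^ (m * o)) = x.
Proof.
by move=> xo; elim: m => [|m IH]; rewrite ?expn0 ?expr1 // mulSn expnD exprM xo.
Qed.

Lemma expr_exp_modn (R : pzSemiRingType) (x : R) a o i :
  x ^+ (a ^ o) = x -> x ^+ (a ^ i) = x ^+ (a ^ (i %% o)).
Proof. by move=> xo; rewrite {1}(divn_eq i o) expnD exprM expr_exp_periodic. Qed.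

Lemma expr_exp_chinese (R : pzSemiRingType) (x y : R) a o1 o2 i j :
  coprime o1 o2 -> x ^+ (a ^ o1) = x -> y ^+ (a ^ o2) = y ->
  exists k, x ^+ (a ^ k) = x ^+ (a ^ i) /\ y ^+ (a ^ k) = y ^+ (a ^ j).
Proof.
move=> co xo yo; exists (chinese o1 o2 i j); split.
- by rewrite (expr_exp_modn _ xo) [RHS](expr_exp_modn _ xo) chinese_modl.
- by rewrite (expr_exp_modn _ yo) [RHS](expr_exp_modn _ yo) chinese_modr.
Qed.

Lemma ordmodP l a : prime l -> coprime a l -> a ^ ordmod l a = 1 %[mod l].
Proof.
move=> pl cal; have l_gt1 := prime_gt1 pl.
have has_ord : has (fun k => a ^ k.+1 == 1 %[mod l]) (iota 0 l).
  apply/hasP; exists l.-2; first by rewrite mem_iota; lia.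
  have -> : l.-2.+1 = totient l by rewrite totient_prime //; lia.
  exact/eqP/Euler_exp_totient.
move: (nth_find 0 has_ord); rewrite has_find size_iota in has_ord.
by rewrite nth_iota // => /eqP.
Qed.

Lemma expr_exp_ordmod (R : pzSemiRingType) (x : R) l a :
  prime l -> coprime a l -> x ^+ l = 1 -> x ^+ (a ^ ordmod l a) = x.
Proof.
by move=> pl cal xl; rewrite -(expr_mod _ xl) ordmodP // (expr_mod _ xl) expr1.
Qed.

Lemma expr_dvdn_eq1 (R : pzSemiRingType) (z : R) n m :
  z ^+ n = 1 -> (n %| m)%N -> z ^+ m = 1.
Proof. by move=> zn nm; rewrite -(expr_mod _ zn) (eqP nm). Qed.

Lemma expr_coprime_eq1 (R : pzSemiRingType) (u : R) a b :
  (0 < a)%N -> coprime a b -> u ^+ a = 1 -> u ^+ b = 1 -> u = 1.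
Proof.
move=> a_gt0 cab ua ub; have [t _] := Bezoutl b a_gt0.
rewrite (eqP cab) => /dvdnP[c tE].
have : u ^+ (1 + t * b) = 1 by rewrite tE mulnC exprM ua expr1n.
by rewrite exprD expr1 mulnC exprM ub expr1n mulr1.
Qed.

Lemma unity_root_neq0 (R : nzRingType) (x : R) n :
  (0 < n)%N -> x ^+ n = 1 -> x != 0.
Proof.
move=> n_gt0 xn; apply: contra_eq_neq xn => ->.
by rewrite expr0n gtn_eqF // eq_sym oner_eq0.
Qed.

Lemma unity_root_decomp (R : pzSemiRingType) (z : R) l1 l2 : coprime l1 l2 ->
  z ^+ (l1 * l2) = 1 -> exists x y, [/\ x ^+ l1 = 1, y ^+ l2 = 1 & z = x * y].
Proof.
move=> co zN; set c1 := chinese l1 l2 1 0; set c2 := chinese l1 l2 0 1.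
exists (z ^+ c1), (z ^+ c2); split.
- rewrite -exprM; apply: expr_dvdn_eq1 zN _; rewrite mulnC dvdn_mul //.
  by rewrite /dvdn chinese_modr // mod0n.
- rewrite -exprM; apply: expr_dvdn_eq1 zN _; rewrite dvdn_mul //.
  by rewrite /dvdn chinese_modl // mod0n.
rewrite -exprD -(expr_mod _ zN).
have -> : c1 + c2 = 1 %[mod l1 * l2].
  apply/eqP; rewrite chinese_remainder //; apply/andP; split; apply/eqP.
    by rewrite -modnDm !chinese_modl // modnDm.
  by rewrite -modnDm !chinese_modr // modnDm.
by rewrite (expr_mod _ zN) expr1.
Qed.

Lemma unity_root_mul_cancel (R : fieldType) (x x' y y' : R) l1 l2 :
  (0 < l1)%N -> (0 < l2)%N -> coprime l1 l2 ->
  x ^+ l1 = 1 -> x' ^+ l1 = 1 -> y ^+ l2 = 1 -> y' ^+ l2 = 1 ->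
  x * y = x' * y' -> x = x' /\ y = y'.
Proof.
move=> l1_gt0 l2_gt0 co xl x'l yl y'l E.
have x0 := unity_root_neq0 l1_gt0 xl; have y'0 := unity_root_neq0 l2_gt0 y'l.
have u1 : x' / x = 1.
  apply: (expr_coprime_eq1 l1_gt0 co); first by rewrite expr_div_n xl x'l divr1.
  have -> : x' / x = y / y' by apply/eqP; rewrite eqr_div // -E mulrC.
  by rewrite expr_div_n yl y'l divr1.
have x'E : x' = x := divr1_eq u1.
by split=> //; apply: (mulfI x0); rewrite E x'E.
Qed.

Lemma horner_Poly_rev (K : fieldType) (s : seq K) (v : K) : v != 0 ->
  (Poly (rev s)).[v] = v ^+ (size s).-1 * (Poly s).[v^-1].
Proof.
move=> v0; set N := size s.
rewrite (horner_coef_wide _ (size_Poly _)) (horner_coef_wide _ (size_Poly s)).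
rewrite size_rev -/N mulr_sumr.
rewrite -(big_mkord xpredT (fun i => (Poly (rev s))`_i * v ^+ i)).
rewrite big_rev_mkord subn0; apply: eq_bigr => k _.
have kN : (k < N)%N := ltn_ord k.
rewrite !coef_Poly nth_rev ?size_rev -/N; last by lia.
have -> : (N - (N - k.+1).+1)%N = k by lia.
have -> : N.-1 = (N - k.+1 + k)%N by lia.
by rewrite exprD exprVn -mulrA [v ^+ k * _]mulrC divfK ?expf_neq0 // mulrC.
Qed.

(* The unused proof argument makes [x ^+ e] additive, hence a ring morphism. *)
Definition frobenius_pow (K : fieldType) (e : nat) of [pchar K].-nat e :=
  fun x : K => x ^+ e.

Section FrobeniusPow.
Variables (K : fieldType) (e : nat) (pchar_e : [pchar K].-nat e).

Lemma frobenius_pow_is_nmod_morphism : nmod_morphism (frobenius_pow pchar_e).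
Proof.
split=> [|x y]; rewrite /frobenius_pow; last exact: exprDn_pchar.
by case/andP: pchar_e => e_gt0 _; rewrite expr0n gtn_eqF.
Qed.

Lemma frobenius_pow_is_monoid_morphism : monoid_morphism (frobenius_pow pchar_e).
Proof. by split=> [|x y]; rewrite /frobenius_pow ?expr1n ?exprMn. Qed.

HB.instance Definition _ := GRing.isNmodMorphism.Build K K (frobenius_pow pchar_e)
  frobenius_pow_is_nmod_morphism.
HB.instance Definition _ := GRing.isMonoidMorphism.Build K K (frobenius_pow pchar_e)
  frobenius_pow_is_monoid_morphism.

End FrobeniusPow.

Lemma pchar_nat_fmorph (K L : fieldType) (f : {rmorphism K -> L}) e :
  [pchar K].-nat e -> [pchar L].-nat e.
Proof. by rewrite (eq_pnat _ (fmorph_pchar f)). Qed.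

Lemma pchar_nat_card (F : finFieldType) : [pchar F].-nat #|F|.
Proof.
have [p _ pchar_p] := finPcharP F.
have := pprimeChar_pgroup pchar_p; rewrite /pgroup cardsT.
by rewrite (eq_pnat _ (pcharf_eq pchar_p)).
Qed.

Lemma size_allpairs_bij (S T U : eqType) (f : S -> T -> U) s t (u : seq U) :
  uniq s -> uniq t -> uniq u ->
  (forall x y, x \in s -> y \in t -> f x y \in u) ->
  (forall c, c \in u -> exists2 x, x \in s & exists2 y, y \in t & c = f x y) ->
  (forall x x' y y', x \in s -> x' \in s -> y \in t -> y' \in t ->
     f x y = f x' y' -> x = x' /\ y = y') ->
  size u = (size s * size t)%N.
Proof.
move=> Us Ut Uu f_in f_onto f_inj; rewrite -(size_allpairs f).
apply/perm_size/uniq_perm => //.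
  apply: allpairs_uniq => // -[x y] [x' y'].
  move=> /allpairsP[[a b] [/= sa tb [-> ->]]] /allpairsP[[a' b'] [/= sa' tb' [-> ->]]].
  by move=> /(f_inj _ _ _ _ sa sa' tb tb') [-> ->].
move=> c; apply/idP/allpairsP => [/f_onto[x sx [y ty ->]]|[[x y] [/= sx ty ->]]].
  by exists (x, y).
exact: f_in.
Qed.

Lemma mem_Omega (F : finFieldType) q n (f : {poly F}) : (0 < n)%N ->
  f \in Omega F q n <-> SCRIM q f /\ f %| 'X^n - 1.
Proof.
move=> n_gt0; rewrite /Omega mem_filter mem_undup.
split; first by case/andP => /asboolP.
move=> [S D]; apply/andP; split; first exact/asboolP.
have size_Xn : size ('X^n - 1 : {poly F}) = n.+1 by rewrite -polyC1 size_XnsubC.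
have size_f : (size f <= n.+1)%N by rewrite -size_Xn dvdp_leq // -size_poly_eq0 size_Xn.
have size_coefs : size (mkseq (fun i => f`_i) n.+1) == n.+1 by rewrite size_mkseq.
apply/mapP; exists (Tuple size_coefs); first exact: mem_enum.
apply/polyP => j; rewrite coef_Poly /=.
have [j_small|j_large] := ltnP j n.+1; first by rewrite nth_mkseq.
by rewrite !nth_default ?size_mkseq // (leq_trans size_f j_large).
Qed.

Lemma Omega_uniq (F : finFieldType) q n : uniq (Omega F q n).
Proof. by rewrite filter_uniq ?undup_uniq. Qed.

Lemma mem_Omega_irr (F : finFieldType) q n (f : {poly F}) : (0 < n)%N ->
  (forall g : {poly F}, g \is monic -> irreducible_poly g ->
     g %| 'X^n - 1 -> SCRIM q g) ->
  f \in Omega F q n <-> [/\ f \is monic, irreducible_poly f & f %| 'X^n - 1].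
Proof.
move=> n_gt0 all_SCRIM; rewrite mem_Omega //.
by split=> [[[mf irf _ _] fd] | [mf irf fd]] //; split=> //; apply: all_SCRIM.
Qed.

Lemma root_map_Xn_sub1 (K L : fieldType) (io : {rmorphism K -> L}) n (z : L) :
  root (map_poly io ('X^n - 1)) z = (z ^+ n == 1).
Proof. by rewrite rmorphB /= map_polyXn rmorph1 rootE !hornerE subr_eq0. Qed.

Lemma unity_root_dvdp (K L : fieldType) (io : {rmorphism K -> L}) (f : {poly K}) n z :
  f %| 'X^n - 1 -> root (map_poly io f) z -> z ^+ n = 1.
Proof.
by rewrite -(dvdp_map io) => fd /(root_dvdp fd); rewrite root_map_Xn_sub1 => /eqP.
Qed.

Lemma dvdp_Xn_sub1_coef0 (K : fieldType) (f : {poly K}) n : (0 < n)%N ->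
  f %| 'X^n - 1 -> f`_0 != 0.
Proof.
move=> n_gt0 fd; rewrite -horner_coef0; apply: contraTneq isT => f0.
have /(root_dvdp fd) : root f 0 by rewrite /root f0.
by rewrite /root !hornerE expr0n gtn_eqF // sub0r oppr_eq0 oner_eq0.
Qed.

Lemma closed_root_exists (L : closedFieldType) (P : {poly L}) :
  exists x, (1 < size P)%N ==> root P x.
Proof.
have [P_gt1|] := ltnP 1 (size P); last by exists 0.
have /closed_rootP[x rx] : size P != 1%N by rewrite gtn_eqF.
by exists x; rewrite rx implybT.
Qed.

Definition some_root (L : closedFieldType) (P : {poly L}) :=
  xchoose (closed_root_exists P).

Lemma root_some_root (L : closedFieldType) (P : {poly L}) :
  (1 < size P)%N -> root P (some_root P).
Proof. exact/implyP/(xchooseP (closed_root_exists P)). Qed.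

Section AlgebraicClosure.
Variables (F : finFieldType) (L : closedFieldType) (io : {rmorphism F -> L}).
Local Notation Q := #|F|.
Local Notation "f ^i" := (map_poly io f) (at level 2, format "f ^i").

Definition frobQ : {rmorphism L -> L} :=
  frobenius_pow (pchar_nat_fmorph io (pchar_nat_card F)).

Lemma frobQE x : frobQ x = x ^+ Q. Proof. by []. Qed.

Lemma frobQ_map (f : {poly F}) : map_poly frobQ f^i = f^i.
Proof. by apply/polyP => j; rewrite !coef_map /= frobQE -rmorphXn expf_card. Qed.

Lemma root_exprQ (f : {poly F}) z i : root f^i z -> root f^i (z ^+ (Q ^ i)).
Proof.
move=> rz; elim: i => [|i /eqP IH]; first by rewrite expn0 expr1.
by apply/eqP; rewrite expnSr exprM -frobQE -{1}frobQ_map horner_map IH rmorph0.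
Qed.

Lemma frobQ_fixed w : w ^+ Q = w -> exists c, w = io c.
Proof.
move=> wQ; have : root (\prod_(a <- map io (enum F)) ('X - a%:P)) w.
  rewrite prod_map_poly big_enum -finField_genPoly rmorphB /= map_polyXn map_polyX.
  by rewrite /root !hornerE wQ subrr.
by rewrite root_prod_XsubC => /mapP[c _ ->]; exists c.
Qed.

Lemma frobQ_fixed_poly (g : {poly L}) : map_poly frobQ g = g -> exists k, k^i = g.
Proof.
move=> gQ; pose pre w := odflt 0 [pick c : F | io c == w].
exists (\poly_(j < size g) pre g`_j); apply/polyP => j.
rewrite coef_map coef_poly; case: ltnP => [_|/(nth_default 0) ->]; last exact: rmorph0.
have [c ->] : exists c, g`_j = io c by apply: frobQ_fixed; rewrite -frobQE -coef_map gQ.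
by rewrite /pre; case: pickP => [_ /eqP //|/(_ c)]; rewrite eqxx.
Qed.

Section Orbit.
Variables (z : L) (d : nat).
Hypotheses (d_gt0 : (0 < d)%N) (z_period : z ^+ (Q ^ d) = z).

(* [d] is any period of [z], not necessarily the least one, hence the [undup]. *)
Definition frob_orbit := undup [seq z ^+ (Q ^ i) | i <- iota 0 d].

Definition orbit_poly := \prod_(w <- frob_orbit) ('X - w%:P).

Lemma frob_orbitP w : reflect (exists i, w = z ^+ (Q ^ i)) (w \in frob_orbit).
Proof.
rewrite mem_undup; apply: (iffP mapP) => [[i _ ->]|[i ->]]; first by exists i.
by exists (i %% d)%N; rewrite ?mem_iota ?ltn_mod // -expr_exp_modn.
Qed.

Lemma root_exprQ_period (f : {poly F}) j : root f^i (z ^+ (Q ^ j)) -> root f^i z.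
Proof.
move=> /(root_exprQ (j * d.-1)); rewrite -exprM -expnD addnC -mulnSr prednK //.
by rewrite expr_exp_periodic.
Qed.

Lemma frobQ_orbit_poly : map_poly frobQ orbit_poly = orbit_poly.
Proof.
have frob_sub : {subset map frobQ frob_orbit <= frob_orbit}.
  move=> _ /mapP[_ /frob_orbitP[i ->] ->]; apply/frob_orbitP; exists i.+1.
  by rewrite frobQE -exprM -expnSr.
have frob_uniq : uniq (map frobQ frob_orbit).
  by rewrite (map_inj_uniq (fmorph_inj _)) undup_uniq.
have [_ frob_eq] := uniq_min_size frob_uniq frob_sub (eq_leq (esym (size_map _ _))).
rewrite map_prod_XsubC -(big_map frobQ xpredT (fun w => 'X - w%:P)).
by apply/perm_big/uniq_perm; rewrite ?undup_uniq.
Qed.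

Lemma orbit_poly_dvdp (g : {poly F}) : root g^i z -> orbit_poly %| g^i.
Proof.
move=> rz; have [r ->] : exists r, g^i = r * orbit_poly.
  apply: uniq_roots_prod_XsubC; last by rewrite uniq_rootsE undup_uniq.
  by apply/allP => _ /frob_orbitP[i ->]; apply: root_exprQ.
exact: dvdp_mull.
Qed.

Lemma orbit_poly_irr :
  exists k : {poly F}, [/\ k \is monic, irreducible_poly k & k^i = orbit_poly].
Proof.
have [k kE] := frobQ_fixed_poly frobQ_orbit_poly.
have z_orbit : z \in frob_orbit by apply/frob_orbitP; exists 0%N; rewrite expr1.
exists k; split=> //; first by rewrite -(map_monic io) kE monic_prod_XsubC.
split=> [|r r1 rk].
  rewrite -(size_map_poly io) kE size_prod_XsubC ltnS lt0n size_eq0.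
  by apply: contraTneq z_orbit => ->.
have /closed_rootP[w rw] : size r^i != 1 by rewrite size_map_poly.
have : w \in frob_orbit.
  by rewrite -root_prod_XsubC -/orbit_poly -kE (root_dvdp _ rw) // dvdp_map.
case/frob_orbitP => j wE; rewrite wE in rw.
by rewrite /eqp rk -(dvdp_map io) kE orbit_poly_dvdp // (root_exprQ_period rw).
Qed.

Lemma map_irr_orbit (f : {poly F}) : f \is monic -> irreducible_poly f ->
  root f^i z -> f^i = orbit_poly.
Proof.
move=> mf irf rf; have [k [mk irk kE]] := orbit_poly_irr.
have kf : k %| f by rewrite -(dvdp_map io) kE orbit_poly_dvdp.
have k_nconst : size k != 1%N by case: irk => /gtn_eqF ->.
by move: (irf k k_nconst kf); rewrite eqp_monic // => /eqP <-.
Qed.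

End Orbit.

Section UnityRoots.
Variables (n : nat) (n_gt0 : (0 < n)%N) (coprime_Qn : coprime Q n).

Lemma unity_frob_period (z : L) : z ^+ n = 1 -> z ^+ (Q ^ totient n) = z.
Proof.
by move=> zn; rewrite -(expr_mod _ zn) Euler_exp_totient // (expr_mod _ zn) expr1.
Qed.

Let totient_n_gt0 : (0 < totient n)%N. Proof. by rewrite totient_gt0. Qed.

Lemma unity_irr_conjugate (f : {poly F}) (z w : L) : z ^+ n = 1 ->
  f \is monic -> irreducible_poly f -> root f^i z -> root f^i w ->
  exists i, w = z ^+ (Q ^ i).
Proof.
move=> zn mf irf rz; have z_period := unity_frob_period zn.
rewrite (map_irr_orbit totient_n_gt0 z_period mf irf rz) root_prod_XsubC.
exact/(frob_orbitP totient_n_gt0 z_period).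
Qed.

Lemma unity_irr_dvdp (f g : {poly F}) (z : L) j : z ^+ n = 1 ->
  f \is monic -> irreducible_poly f -> root f^i z -> root g^i (z ^+ (Q ^ j)) ->
  f %| g.
Proof.
move=> zn mf irf rz rg; have z_period := unity_frob_period zn.
rewrite -(dvdp_map io) (map_irr_orbit totient_n_gt0 z_period mf irf rz).
exact/(orbit_poly_dvdp totient_n_gt0 z_period)/(root_exprQ_period _ z_period rg).
Qed.

Lemma unity_irr_eq (f g : {poly F}) (z : L) : z ^+ n = 1 ->
  f \is monic -> irreducible_poly f -> g \is monic -> irreducible_poly g ->
  root f^i z -> root g^i z -> f = g.
Proof.
move=> zn mf irf mg irg rf rg; have z_period := unity_frob_period zn.
apply: (map_poly_inj io).
by rewrite (map_irr_orbit _ z_period mf irf rf) ?(map_irr_orbit _ z_period mg irg rg).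
Qed.

Lemma unity_irr_factor (P : {poly F}) (z : L) : z ^+ n = 1 -> root P^i z ->
  exists f : {poly F}, [/\ f \is monic, irreducible_poly f, f %| P & root f^i z].
Proof.
move=> zn rP; have z_period := unity_frob_period zn.
have [k [mk irk kE]] := orbit_poly_irr totient_n_gt0 z_period.
exists k; split=> //; first by rewrite -(dvdp_map io) kE orbit_poly_dvdp.
rewrite kE root_prod_XsubC; apply/(frob_orbitP totient_n_gt0 z_period).
by exists 0%N; rewrite expr1.
Qed.

End UnityRoots.

Section SelfReciprocal.
Variables (q : nat) (pchar_q : [pchar F].-nat q).

(* The map alpha |-> bar(alpha)^-1 sending the roots of f to those of f^dagger. *)
Definition invq (x : L) := x^-1 ^+ q.

Lemma invqM x y : invq (x * y) = invq x * invq y.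
Proof. by rewrite /invq invfM exprMn. Qed.

Lemma map_pdagger (f : {poly F}) :
  (pdagger q f)^i = map_poly (frobenius_pow (pchar_nat_fmorph io pchar_q)) (pstar f)^i.
Proof.
apply/polyP => j; rewrite /pdagger /pbar coef_map coef_map_id0; last first.
  by case/andP: pchar_q => q_gt0 _; rewrite /fbar expr0n gtn_eqF.
by rewrite !coef_map /= /fbar rmorphXn.
Qed.

Lemma root_pdagger (f : {poly F}) x :
  x != 0 -> root f^i x -> root (pdagger q f)^i (invq x).
Proof.
move=> x0 /eqP rx; apply/eqP; rewrite map_pdagger.
rewrite [invq x](_ : _ = frobenius_pow (pchar_nat_fmorph io pchar_q) x^-1) //.
rewrite horner_map /pstar map_polyZ hornerZ map_Poly map_rev.
by rewrite horner_Poly_rev ?invr_eq0 // invrK -map_polyE rx !mulr0 rmorph0.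
Qed.

Lemma pdagger_monic (f : {poly F}) : f \is monic -> f`_0 != 0 ->
  pdagger q f \is monic /\ size (pdagger q f) = size f.
Proof.
move=> mf f0; have rev_f : Poly (rev f) = rev f :> seq F.
  apply: (@PolyK _ 0); move: f0.
  by case: (polyseq f) => //= c s; rewrite rev_cons last_rcons.
rewrite [pdagger q f](_ : _ = map_poly (frobenius_pow pchar_q) (pstar f)) //.
rewrite size_map_poly map_monic /pstar size_scale ?invr_eq0 // rev_f size_rev.
have f_gt0 : (0 < size f)%N by rewrite size_poly_gt0 monic_neq0.
split=> //; apply/monicP; rewrite lead_coefZ lead_coefE rev_f size_rev.
by rewrite nth_rev ?prednK // subnn mulVf.
Qed.

Lemma SCRIM_of_invq_conjugate (h : {poly F}) (z : L) n k :
  (0 < n)%N -> coprime Q n -> z ^+ n = 1 ->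
  h \is monic -> irreducible_poly h -> h`_0 != 0 -> root h^i z ->
  invq z = z ^+ (Q ^ k) -> SCRIM q h.
Proof.
move=> n_gt0 cQn zn mh irh h0 rz invq_z; have [mD sD] := pdagger_monic mh h0.
have rD : root (pdagger q h)^i (z ^+ (Q ^ k)).
  by rewrite -invq_z; apply: root_pdagger (unity_root_neq0 n_gt0 zn) rz.
have hD : h %| pdagger q h := unity_irr_dvdp n_gt0 cQn zn mh irh rz rD.
have : h %= pdagger q h by rewrite -dvdp_size_eqp // sD.
by rewrite eqp_monic // => /eqP hE; split.
Qed.

Lemma invq_conjugate_of_SCRIM n (x : L) : (0 < n)%N -> coprime Q n ->
  (forall f : {poly F}, f \is monic -> irreducible_poly f ->
     f %| 'X^n - 1 -> SCRIM q f) ->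
  x ^+ n = 1 -> exists i, invq x = x ^+ (Q ^ i).
Proof.
move=> n_gt0 cQn SCRIM_n xn.
have rX : root ('X^n - 1)^i x by rewrite root_map_Xn_sub1 xn.
have [f [mf irf fd rf]] := unity_irr_factor n_gt0 cQn xn rX.
have [_ _ _ fE] := SCRIM_n f mf irf fd.
apply: (unity_irr_conjugate n_gt0 cQn xn mf irf rf).
by rewrite fE; apply: root_pdagger (unity_root_neq0 n_gt0 xn) rf.
Qed.

Section TwoPrimes.
Variables (l1 l2 : nat).
Hypotheses (l1_prime : prime l1) (l2_prime : prime l2) (coprime_l12 : coprime l1 l2).
Local Notation N := (l1 * l2)%N.
Hypotheses (coprime_Ql1 : coprime Q l1) (coprime_Ql2 : coprime Q l2).
Hypothesis coprime_ord : coprime (ordmod l1 Q) (ordmod l2 Q).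
Hypothesis SCRIM_l1 : forall f : {poly F}, f \is monic -> irreducible_poly f ->
  f %| 'X^l1 - 1 -> SCRIM q f.
Hypothesis SCRIM_l2 : forall f : {poly F}, f \is monic -> irreducible_poly f ->
  f %| 'X^l2 - 1 -> SCRIM q f.

Let l1_gt0 : (0 < l1)%N := prime_gt0 l1_prime.
Let l2_gt0 : (0 < l2)%N := prime_gt0 l2_prime.
Let N_gt0 : (0 < N)%N. Proof. by rewrite muln_gt0 l1_gt0. Qed.
Let coprime_QN : coprime Q N. Proof. by rewrite coprimeMr coprime_Ql1. Qed.

Lemma unity_mul (x y : L) : x ^+ l1 = 1 -> y ^+ l2 = 1 -> (x * y) ^+ N = 1.
Proof.
by move=> xl yl; rewrite exprMn exprM xl expr1n mulnC exprM yl expr1n mulr1.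
Qed.

Lemma exprQ_chinese (x y : L) i j : x ^+ l1 = 1 -> y ^+ l2 = 1 ->
  exists k, x ^+ (Q ^ k) = x ^+ (Q ^ i) /\ y ^+ (Q ^ k) = y ^+ (Q ^ j).
Proof.
move=> xl yl; apply: expr_exp_chinese coprime_ord _ _.
  exact: expr_exp_ordmod xl.
exact: expr_exp_ordmod yl.
Qed.

Lemma invq_conjugate (z : L) : z ^+ N = 1 -> exists k, invq z = z ^+ (Q ^ k).
Proof.
case/(unity_root_decomp coprime_l12) => x [y [xl yl ->]].
have [i xi] := invq_conjugate_of_SCRIM l1_gt0 coprime_Ql1 SCRIM_l1 xl.
have [j yj] := invq_conjugate_of_SCRIM l2_gt0 coprime_Ql2 SCRIM_l2 yl.
have [k [xk yk]] := exprQ_chinese i j xl yl.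
by exists k; rewrite invqM xi yj exprMn xk yk.
Qed.

Lemma irr_factor_SCRIM (h : {poly F}) : h \is monic -> irreducible_poly h ->
  h %| 'X^N - 1 -> SCRIM q h.
Proof.
move=> mh irh hd; have /closed_rootP[z rz] : size h^i != 1%N.
  by rewrite size_map_poly gtn_eqF //; case: irh.
have zN := unity_root_dvdp hd rz; have [k invq_z] := invq_conjugate zN.
exact: (SCRIM_of_invq_conjugate N_gt0 coprime_QN zN mh irh
  (dvdp_Xn_sub1_coef0 N_gt0 hd) rz invq_z).
Qed.

Let memO f := mem_Omega_irr f N_gt0 irr_factor_SCRIM.
Let memO1 f := mem_Omega_irr f l1_gt0 SCRIM_l1.
Let memO2 f := mem_Omega_irr f l2_gt0 SCRIM_l2.

Definition factor_of (s : seq {poly F}) (z : L) :=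
  nth 0 s (find (fun h => root h^i z) s).

Lemma factor_of_Omega (z : L) : z ^+ N = 1 ->
  factor_of (Omega F q N) z \in Omega F q N /\ root (factor_of (Omega F q N) z)^i z.
Proof.
move=> zN; have rX : root ('X^N - 1)^i z by rewrite root_map_Xn_sub1 zN.
have [h [mh irh hd rh]] := unity_irr_factor N_gt0 coprime_QN zN rX.
have has_z : has (fun h => root h^i z) (Omega F q N).
  by apply/hasP; exists h => //; apply/(memO h).
by split; [apply: mem_nth; rewrite -has_find | exact: (nth_find 0 has_z)].
Qed.

Let rootF (f : {poly F}) := some_root f^i.

Lemma rootF_unity (f : {poly F}) n : irreducible_poly f -> f %| 'X^n - 1 ->
  root f^i (rootF f) /\ rootF f ^+ n = 1.
Proof.
move=> irf fd; have rf : root f^i (rootF f).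
  by apply: root_some_root; rewrite size_map_poly; case: irf.
by split=> //; apply: unity_root_dvdp fd rf.
Qed.

Let phi f1 f2 := factor_of (Omega F q N) (rootF f1 * rootF f2).

Lemma phi_onto h : h \in Omega F q N ->
  exists2 f1, f1 \in Omega F q l1 & exists2 f2, f2 \in Omega F q l2 & h = phi f1 f2.
Proof.
case/memO => mh irh hd; have [rz zN] := rootF_unity irh hd.
have [x [y [xl yl zE]]] := unity_root_decomp coprime_l12 zN.
have rxl : root ('X^l1 - 1)^i x by rewrite root_map_Xn_sub1 xl.
have ryl : root ('X^l2 - 1)^i y by rewrite root_map_Xn_sub1 yl.
have [f1 [mf1 irf1 f1d rx]] := unity_irr_factor l1_gt0 coprime_Ql1 xl rxl.
have [f2 [mf2 irf2 f2d ry]] := unity_irr_factor l2_gt0 coprime_Ql2 yl ryl.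
exists f1; first exact/(memO1 f1).
exists f2; first exact/(memO2 f2).
have [rx' x'l] := rootF_unity irf1 f1d; have [ry' y'l] := rootF_unity irf2 f2d.
have [i x'E] := unity_irr_conjugate l1_gt0 coprime_Ql1 xl mf1 irf1 rx rx'.
have [j y'E] := unity_irr_conjugate l2_gt0 coprime_Ql2 yl mf2 irf2 ry ry'.
have [k [xk yk]] := exprQ_chinese i j xl yl.
have [/memO[mh' irh' _] rh'] := factor_of_Omega (unity_mul x'l y'l).
apply: (unity_irr_eq N_gt0 coprime_QN (unity_mul x'l y'l) mh irh mh' irh' _ rh').
by rewrite x'E y'E -xk -yk -exprMn -zE root_exprQ.
Qed.

Lemma phi_inj f1 g1 f2 g2 : f1 \in Omega F q l1 -> g1 \in Omega F q l1 ->
  f2 \in Omega F q l2 -> g2 \in Omega F q l2 -> phi f1 f2 = phi g1 g2 ->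
  f1 = g1 /\ f2 = g2.
Proof.
case/memO1 => mf1 irf1 f1d /memO1[mg1 irg1 g1d] /memO2[mf2 irf2 f2d] /memO2[mg2 irg2 g2d].
have [rx xl] := rootF_unity irf1 f1d; have [rx' x'l] := rootF_unity irg1 g1d.
have [ry yl] := rootF_unity irf2 f2d; have [ry' y'l] := rootF_unity irg2 g2d.
rewrite /phi; set x := rootF f1; set x' := rootF g1.
set y := rootF f2; set y' := rootF g2.
move=> phiE; have xyN := unity_mul xl yl.
have [/memO[mh irh _] rh] := factor_of_Omega xyN.
have [_ rh'] := factor_of_Omega (unity_mul x'l y'l); rewrite -phiE in rh'.
have [i] := unity_irr_conjugate N_gt0 coprime_QN xyN mh irh rh rh'.
rewrite exprMn => x'y'E.
have xQl : (x ^+ (Q ^ i)) ^+ l1 = 1 by rewrite exprAC xl expr1n.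
have yQl : (y ^+ (Q ^ i)) ^+ l2 = 1 by rewrite exprAC yl expr1n.
have [x'E y'E] := unity_root_mul_cancel l1_gt0 l2_gt0 coprime_l12 x'l xQl y'l yQl x'y'E.
split.
- apply: (unity_irr_eq l1_gt0 coprime_Ql1 x'l mf1 irf1 mg1 irg1 _ rx').
  by rewrite x'E; apply: root_exprQ.
- apply: (unity_irr_eq l2_gt0 coprime_Ql2 y'l mf2 irf2 mg2 irg2 _ ry').
  by rewrite y'E; apply: root_exprQ.
Qed.

Lemma size_Omega_mul :
  size (Omega F q N) = (size (Omega F q l1) * size (Omega F q l2))%N.
Proof.
apply: (size_allpairs_bij (f := phi)); rewrite ?Omega_uniq //; last exact: phi_inj.
  move=> f1 f2 /memO1[_ irf1 f1d] /memO2[_ irf2 f2d].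
  have [_ xl] := rootF_unity irf1 f1d; have [_ yl] := rootF_unity irf2 f2d.
  exact: (factor_of_Omega (unity_mul xl yl)).1.
exact: phi_onto.
Qed.

End TwoPrimes.

End SelfReciprocal.

End AlgebraicClosure.

Theorem corollary2p13 (F : finFieldType) (q l1 l2 : nat) :
  (exists p k : nat, [/\ prime p, (0 < k)%N & q = (p ^ k)%N]) ->
  #|F| = (q ^ 2)%N ->
  prime l1 -> odd l1 -> prime l2 -> odd l2 -> l1 <> l2 ->
  coprime l1 q -> coprime l2 q ->
  (forall f : {poly F}, f \is monic -> irreducible_poly f ->
      f %| 'X^l1 - 1 -> SCRIM q f) ->
  (forall f : {poly F}, f \is monic -> irreducible_poly f ->
      f %| 'X^l2 - 1 -> SCRIM q f) ->
  coprime (ordmod l1 (q ^ 2)) (ordmod l2 (q ^ 2)) ->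
  size (Omega F q (l1 * l2)) = (size (Omega F q l1) * size (Omega F q l2))%N.
Proof.
move=> [p [k [p_prime _ q_def]]] card_F l1_prime _ l2_prime _ l1_neq_l2.
move=> coprime_l1q coprime_l2q SCRIM_l1 SCRIM_l2; rewrite -card_F => coprime_ord.
have [L [io _]] := countable_algebraic_closure F.
have pchar_p : p \in [pchar F].
  by apply: (@card_finPcharP _ _ (k * 2)); rewrite // card_F q_def expnM.
have pchar_q : [pchar F].-nat q.
  by rewrite q_def (eq_pnat _ (pcharf_eq pchar_p)) pnatX pnat_id.
have coprime_l12 : coprime l1 l2 by rewrite prime_coprime // dvdn_prime2 //; exact/eqP.
have coprime_Q l : coprime l q -> coprime #|F| l.
  by rewrite card_F coprime_sym => /(coprimeXl 2).
exact: (size_Omega_mul io pchar_q l1_prime l2_prime coprime_l12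
  (coprime_Q _ coprime_l1q) (coprime_Q _ coprime_l2q) coprime_ord SCRIM_l1 SCRIM_l2).
Qed.
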